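(* Let $F\subseteq\mathbb{R}$ be a countable subfield of $\mathbb{R}$ that is closed under Turing equivalence. Then there is a set $\mathcal{C}$ of Turing degrees, linearly ordered by $\le_T$, such that $F=\mathbb{R}_{\wedge\mathcal{C}}$, the set of all reals computable from some real whose degree lies in $\mathcal{C}$.
   Context: A set of reals is closed under Turing equivalence if it contains every real Turing equivalent to one of its elements. *)

From Stdlib Require Import Reals QArith Qreals List Cantor.
Import ListNotations.
Open Scope R_scope.

(* Codes for partial recursive functions with an oracle, in Kleene's style.
   Functions take a list of natural-number arguments (missing arguments
   default to 0). *)
Inductive code : Type :=
  | cZero : code
  | cSucc : code
  | cProj : nat -> code
  | cOrc  : code
  | cComp : code -> codes -> code
  | cPrec : code -> code -> code
  | cMu   : code -> code
with codes : Type :=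
  | cnil : codes
  | ccons : code -> codes -> codes.

Definition b2n (b : bool) : nat := if b then 1%nat else 0%nat.

Inductive eval (o : nat -> bool) : code -> list nat -> nat -> Prop :=
  | ev_zero : forall v, eval o cZero v 0
  | ev_succ : forall v, eval o cSucc v (S (hd 0%nat v))
  | ev_proj : forall i v, eval o (cProj i) v (nth i v 0%nat)
  | ev_orc  : forall v, eval o cOrc v (b2n (o (hd 0%nat v)))
  | ev_comp : forall f gs v ws y,
      evals o gs v ws -> eval o f ws y -> eval o (cComp f gs) v y
  | ev_prec0 : forall f g v y,
      eval o f v y -> eval o (cPrec f g) (0%nat :: v) y
  | ev_precS : forall f g n v z y,
      eval o (cPrec f g) (n :: v) z -> eval o g (n :: z :: v) y ->
      eval o (cPrec f g) (S n :: v) y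
  | ev_mu : forall f v y,
      eval o f (y :: v) 0 ->
      (forall k, (k < y)%nat -> exists m, eval o f (k :: v) (S m)) ->
      eval o (cMu f) v y
with evals (o : nat -> bool) : codes -> list nat -> list nat -> Prop :=
  | evs_nil : forall v, evals o cnil v []
  | evs_cons : forall g gs v w ws,
      eval o g v w -> evals o gs v ws -> evals o (ccons g gs) v (w :: ws).

Definition turing_le (A B : nat -> bool) : Prop :=
  exists c : code, forall n : nat, eval B c [n] (b2n (A n)).

Definition turing_eqv (A B : nat -> bool) : Prop :=
  turing_le A B /\ turing_le B A.

Definition qenum (n : nat) : Q :=
  let (a, b) := Cantor.of_nat n in
  let (s, m) := Cantor.of_nat a in
  Qmake (if Nat.even s then Z.of_nat m else (- Z.of_nat m)%Z) (Pos.of_succ_nat b).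

(* The (lower) Dedekind cut of a real x, coded as a set of naturals:
   n is in the cut iff the n-th rational is < x.  The Turing degree of x is
   the Turing degree of this set. *)
Definition cut (x : R) : nat -> bool :=
  fun n => if Rlt_dec (Q2R (qenum n)) x then true else false.

Definition real_turing_le (x y : R) : Prop := turing_le (cut x) (cut y).
Definition real_turing_eqv (x y : R) : Prop := turing_eqv (cut x) (cut y).

Definition is_degree (D : (nat -> bool) -> Prop) : Prop :=
  exists A, forall B, D B <-> turing_eqv B A.

Definition degree_le (D1 D2 : (nat -> bool) -> Prop) : Prop :=
  exists A B, D1 A /\ D2 B /\ turing_le A B.

Definition reals_below (C : ((nat -> bool) -> Prop) -> Prop) (x : R) : Prop :=
  exists D, C D /\ exists y : R, D (cut y) /\ real_turing_le x y.

Definition is_subfield (F : R -> Prop) : Prop :=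
  F 0 /\ F 1 /\
  (forall x y, F x -> F y -> F (x + y)) /\
  (forall x, F x -> F (- x)) /\
  (forall x y, F x -> F y -> F (x * y)) /\
  (forall x, F x -> x <> 0 -> F (/ x)).

Definition countable_set (F : R -> Prop) : Prop :=
  exists e : nat -> R, forall x, F x <-> exists n, e n = x.

Definition closed_under_turing_eqv (F : R -> Prop) : Prop :=
  forall x y, F x -> real_turing_eqv x y -> F y.

(* Every set A of naturals is coded by the real real_of A = sum_k A(k) 4^-(k+1), whose
   Dedekind cut is Turing equivalent to A: the k-th digit is read off the cut by one
   comparison with a midpoint, and conversely a rational is compared with real_of A by
   bracketing the real between finite approximations until they separate, the one
   rational that may equal it being hard-wired.

   The coding is additive on joins: real_of (A ⊕ B) = real_of (A ⊕ ∅) + real_of (∅ ⊕ B).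
   So if x <=_T y with y in F, the codes of cut x ⊕ cut y and of ∅ ⊕ cut y both have the
   degree of y, hence lie in F, and so does their difference, which has the degree of x:
   F is closed downwards under <=_T, and similarly under joins. Enumerating F as
   e_0, e_1, ..., the reals z_0 = e_0, z_(n+1) = real_of (cut z_n ⊕ cut e_(n+1)) form a
   <=_T-chain in F bounding every element of F, and C is the set of degrees of the z_n. *)

From Stdlib Require Import Reals.
From Coquelicot Require Import Coquelicot.
From Stdlib Require Import Lra Lia List Arith Cantor QArith Qreals ZArith.
From Stdlib Require Import Classical ClassicalEpsilon.
Import ListNotations.
Open Scope R_scope.

(** * Computability relative to an oracle *)

Section Computable.
Variable o : nat -> bool.
Local Open Scope nat_scope.

Definition computable_in {A : Type} (inp : A -> list nat) (f : A -> nat) : Prop :=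
  exists c, forall a, eval o c (inp a) (f a).

Definition computable1 (f : nat -> nat) : Prop := computable_in (fun x => [x]) f.
Definition computable2 (f : nat -> nat -> nat) : Prop :=
  computable_in (fun p : nat * nat => [fst p; snd p]) (fun p => f (fst p) (snd p)).
Definition computable3 (f : nat -> nat -> nat -> nat) : Prop :=
  computable_in (fun p : nat * nat * nat => [fst (fst p); snd (fst p); snd p])
    (fun p => f (fst (fst p)) (snd (fst p)) (snd p)).

Section Composition.
Context {A : Type} (inp : A -> list nat).

Lemma computable_ext (f g : A -> nat) :
  (forall a, f a = g a) -> computable_in inp f -> computable_in inp g.
Proof. intros E [c Hc]. exists c. intros a. rewrite <- E. apply Hc. Qed.

Lemma computable_const k : computable_in inp (fun _ => k).
Proof.
  induction k as [|k [c Hc]].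
  - exists cZero. constructor.
  - exists (cComp cSucc (ccons c cnil)). intros a.
    apply ev_comp with [k]; [repeat constructor; apply Hc | apply (ev_succ o [k])].
Qed.

Lemma computable_proj i : computable_in inp (fun a => nth i (inp a) 0).
Proof. exists (cProj i). constructor. Qed.

Lemma computable_comp1 f (g : A -> nat) :
  computable1 f -> computable_in inp g -> computable_in inp (fun a => f (g a)).
Proof.
  intros [cf Hf] [cg Hg]. exists (cComp cf (ccons cg cnil)). intros a.
  apply ev_comp with [g a]; [repeat constructor; apply Hg | apply Hf].
Qed.

Lemma computable_comp2 f (g h : A -> nat) :
  computable2 f -> computable_in inp g -> computable_in inp h ->
  computable_in inp (fun a => f (g a) (h a)).
Proof.
  intros [cf Hf] [cg Hg] [ch Hh]. exists (cComp cf (ccons cg (ccons ch cnil))). intros a.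
  apply ev_comp with [g a; h a]; [repeat constructor; auto | apply (Hf (g a, h a))].
Qed.

Lemma computable_comp3 f (g h k : A -> nat) :
  computable3 f -> computable_in inp g -> computable_in inp h -> computable_in inp k ->
  computable_in inp (fun a => f (g a) (h a) (k a)).
Proof.
  intros [cf Hf] [cg Hg] [ch Hh] [ck Hk].
  exists (cComp cf (ccons cg (ccons ch (ccons ck cnil)))). intros a.
  apply ev_comp with [g a; h a; k a]; [repeat constructor; auto | apply (Hf (g a, h a, k a))].
Qed.

End Composition.

Lemma computable_succ : computable1 S.
Proof. exists cSucc. intros x. apply (ev_succ o [x]). Qed.

Lemma computable_oracle : computable1 (fun x => b2n (o x)).
Proof. exists cOrc. intros x. apply (ev_orc o [x]). Qed.

Lemma computable_rec1 (h : nat -> nat) a g :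
  computable2 g -> h 0 = a -> (forall n, h (S n) = g n (h n)) -> computable1 h.
Proof.
  intros [cg Hg] h0 hS. destruct (computable_const (fun _ : unit => []) a) as [ca Ha].
  exists (cPrec ca cg). intros n. induction n.
  - rewrite h0. constructor. apply (Ha tt).
  - rewrite hS. econstructor; [apply IHn | apply (Hg (n, h n))].
Qed.

Lemma computable_rec2 (h : nat -> nat -> nat) a g :
  computable1 a -> computable3 g ->
  (forall x, h x 0 = a x) -> (forall x n, h x (S n) = g n (h x n) x) -> computable2 h.
Proof.
  intros [ca Ha] [cg Hg] h0 hS.
  assert (Hrec : computable2 (fun n x => h x n)).
  { exists (cPrec ca cg). intros [n x]; simpl. induction n.
    - rewrite h0. constructor. apply Ha.
    - rewrite hS. econstructor; [apply IHn | apply (Hg (n, h x n, x))]. }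
  exact (computable_comp2 _ (fun n x => h x n) snd fst Hrec
           (computable_proj (fun p : nat * nat => [fst p; snd p]) 1)
           (computable_proj (fun p : nat * nat => [fst p; snd p]) 0)).
Qed.

Lemma computable_eqb0 : computable1 (fun n => b2n (n =? 0)).
Proof.
  apply (computable_rec1 _ 1 (fun _ _ => 0)); [exact (computable_const _ 0) | reflexivity |].
  reflexivity.
Qed.

Section Booleans.
Context {A : Type} (inp : A -> list nat).
Variables p q : A -> bool.
Hypothesis Hp : computable_in inp (fun a => b2n (p a)).
Hypothesis Hq : computable_in inp (fun a => b2n (q a)).

Lemma computable_negb : computable_in inp (fun a => b2n (negb (p a))).
Proof.
  eapply computable_ext; [| exact (computable_comp1 _ _ _ computable_eqb0 Hp)].
  intros a; cbv beta. destruct (p a); reflexivity.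
Qed.

Lemma computable_andb : computable_in inp (fun a => b2n (p a && q a)).
Proof.
  set (guard x n := match n with 0 => 0 | S _ => x end).
  assert (Hguard : computable2 guard).
  { apply (computable_rec2 _ (fun _ => 0) (fun _ _ x => x));
      [exact (computable_const _ 0) | exact (computable_proj _ 2) | reflexivity | reflexivity]. }
  eapply computable_ext; [| exact (computable_comp2 _ _ _ _ Hguard Hq Hp)].
  intros a; cbv beta. destruct (p a), (q a); reflexivity.
Qed.

End Booleans.

Lemma computable_orb {A : Type} (inp : A -> list nat) (p q : A -> bool) :
  computable_in inp (fun a => b2n (p a)) -> computable_in inp (fun a => b2n (q a)) ->
  computable_in inp (fun a => b2n (p a || q a)).
Proof.
  intros Hp Hq.
  apply (computable_ext _ (fun a => b2n (negb (negb (p a) && negb (q a))))).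
  - intros a. destruct (p a), (q a); reflexivity.
  - apply computable_negb, computable_andb; apply computable_negb; assumption.
Qed.

End Computable.

Create HintDb computable.
#[export] Hint Resolve computable_succ computable_oracle : computable.

(* [computable] decomposes the body of the function syntactically; every function symbol
   it meets must be covered by the hint database [computable] or by a hypothesis. *)
Ltac computable_step :=
  match goal with
  | |- computable_in _ _ (fun _ => ?k) => apply computable_const
  | |- computable_in ?o ?inp (fun a => a) => exact (computable_proj o inp 0)
  | |- computable_in ?o ?inp (fun a => fst a) => exact (computable_proj o inp 0)
  | |- computable_in ?o ?inp (fun a => fst (fst a)) => exact (computable_proj o inp 0)
  | |- computable_in ?o ?inp (fun a => snd (fst a)) => exact (computable_proj o inp 1)
  | |- computable_in ?o ?inp (fun a => snd a) =>
      first [exact (computable_proj o inp 1) | exact (computable_proj o inp 2)]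
  | |- computable_in _ _ (fun a => b2n (negb _)) => apply computable_negb
  | |- computable_in _ _ (fun a => b2n (_ && _)) => apply computable_andb
  | |- computable_in _ _ (fun a => b2n (_ || _)) => apply computable_orb
  | |- computable_in _ _ (fun a => b2n (?f (@?g a) (@?h a))) =>
      apply (@computable_comp2 _ _ _ (fun x y => b2n (f x y)) g h);
      [solve [auto with computable] | |]
  | |- computable_in _ _ (fun a => b2n (?f (@?g a))) =>
      apply (@computable_comp1 _ _ _ (fun x => b2n (f x)) g); [solve [auto with computable] |]
  | |- computable_in _ _ (fun a => ?f (@?g a) (@?h a) (@?k a)) =>
      apply (@computable_comp3 _ _ _ f g h k); [solve [auto with computable] | | |]
  | |- computable_in _ _ (fun a => ?f (@?g a) (@?h a)) =>
      apply (@computable_comp2 _ _ _ f g h); [solve [auto with computable] | |]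
  | |- computable_in _ _ (fun a => ?f (@?g a)) =>
      apply (@computable_comp1 _ _ _ f g); [solve [auto with computable] |]
  end.

Ltac computable :=
  try unfold computable1, computable2, computable3; solve [repeat computable_step].

Local Open Scope nat_scope.
Implicit Type o : nat -> bool.

Lemma computable_pred o : computable1 o pred.
Proof. apply (computable_rec1 _ _ 0 (fun n _ => n)); [computable | reflexivity ..]. Qed.
#[export] Hint Resolve computable_pred : computable.

Lemma computable_add o : computable2 o Nat.add.
Proof.
  apply (computable_rec2 _ _ (fun x => x) (fun _ z _ => S z)); [computable | computable | |];
    intros; lia.
Qed.
#[export] Hint Resolve computable_add : computable.

Lemma computable_mul o : computable2 o Nat.mul.
Proof.
  apply (computable_rec2 _ _ (fun _ => 0) (fun _ z x => z + x)); [computable | computable | |];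
    intros; lia.
Qed.
#[export] Hint Resolve computable_mul : computable.

Lemma computable_sub o : computable2 o Nat.sub.
Proof.
  apply (computable_rec2 _ _ (fun x => x) (fun _ z _ => pred z)); [computable | computable | |];
    intros; lia.
Qed.
#[export] Hint Resolve computable_sub : computable.

Lemma computable_pow o : computable2 o Nat.pow.
Proof.
  apply (computable_rec2 _ _ (fun _ => 1) (fun _ z x => x * z)); [computable | computable | |];
    reflexivity.
Qed.
#[export] Hint Resolve computable_pow : computable.

Lemma computable_leb o : computable2 o (fun x y => b2n (x <=? y)).
Proof.
  apply (computable_ext _ _ (fun p => b2n (fst p - snd p =? 0))).
  - intros [x y]; simpl. destruct (Nat.leb_spec x y), (Nat.eqb_spec (x - y) 0); lia.
  - apply (computable_comp1 _ _ (fun n => b2n (n =? 0))); [apply computable_eqb0 | computable].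
Qed.
#[export] Hint Resolve computable_leb : computable.

Lemma computable_ltb o : computable2 o (fun x y => b2n (x <? y)).
Proof.
  apply (computable_ext _ _ (fun p => b2n (S (fst p) <=? snd p))); [| computable].
  intros [x y]; reflexivity.
Qed.
#[export] Hint Resolve computable_ltb : computable.

Lemma computable_eqb o : computable2 o (fun x y => b2n (x =? y)).
Proof.
  apply (computable_ext _ _ (fun p => b2n ((fst p <=? snd p) && (snd p <=? fst p))));
    [| computable].
  intros [x y]; simpl. destruct (Nat.eqb_spec x y), (Nat.leb_spec x y), (Nat.leb_spec y x);
    simpl; lia.
Qed.
#[export] Hint Resolve computable_eqb : computable.

Lemma computable_even o : computable1 o (fun n => b2n (Nat.even n)).
Proof.
  apply (computable_rec1 _ _ 1 (fun _ z => 1 - z)); [computable | reflexivity |].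
  intros n. rewrite Nat.even_succ, <- Nat.negb_even. destruct (Nat.even n); reflexivity.
Qed.
#[export] Hint Resolve computable_even : computable.

Lemma computable_div2 o : computable1 o Nat.div2.
Proof.
  apply (computable_rec1 _ _ 0 (fun n z => z + b2n (negb (Nat.even n))));
    [computable | reflexivity |].
  intros n. pose proof (Nat.div2_odd n) as En. pose proof (Nat.div2_odd (S n)) as ESn.
  rewrite Nat.odd_succ, <- Nat.negb_odd in ESn. rewrite <- Nat.negb_odd.
  destruct (Nat.odd n); cbn [negb b2n Nat.b2n] in *; lia.
Qed.
#[export] Hint Resolve computable_div2 : computable.

Lemma computable_least o (p : nat -> nat -> bool) (g : nat -> nat) :
  computable2 o (fun y x => b2n (p y x)) ->
  (forall x, p (g x) x = true /\ forall y, y < g x -> p y x = false) -> computable1 o g.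
Proof.
  intros Hp Hg.
  assert (Hnp : computable2 o (fun y x => b2n (negb (p y x)))) by (apply computable_negb, Hp).
  destruct Hnp as [c Hc]. exists (cMu c). intros x. destruct (Hg x) as [Hgx Hlt].
  constructor.
  - change 0 with (b2n (negb true)). rewrite <- Hgx. apply (Hc (g x, x)).
  - intros y Hy. exists 0. change 1 with (b2n (negb false)). rewrite <- (Hlt y Hy).
    apply (Hc (y, x)).
Qed.

Lemma computable_search o (p : nat -> nat -> bool) :
  computable2 o (fun y x => b2n (p y x)) -> (forall x, exists y, p y x = true) ->
  exists g, computable1 o g /\ forall x, p (g x) x = true.
Proof.
  intros Hp Hex.
  assert (Least : forall x, {y | p y x = true /\ forall z, z < y -> p z x = false}).
  { intros x. apply constructive_indefinite_description.
    destruct (Wf_nat.dec_inh_nat_subset_has_unique_least_element (fun y => p y x = true))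
      as [y [[Hy Hmin] _]]; [intros y; destruct (p y x); auto | apply Hex |].
    exists y. split; [exact Hy |]. intros z Hz.
    destruct (p z x) eqn:E; [specialize (Hmin z E); lia | reflexivity]. }
  exists (fun x => proj1_sig (Least x)). split.
  - apply (computable_least o p); [exact Hp |]. intros x. exact (proj2_sig (Least x)).
  - intros x. exact (proj1 (proj2_sig (Least x))).
Qed.

Definition triangle (s : nat) : nat := nat_rec (fun _ => nat) 0 (fun i m => S i + m) s.
Definition cantor_pair (x y : nat) : nat := to_nat (x, y).
Definition cantor_fst (n : nat) : nat := fst (of_nat n).
Definition cantor_snd (n : nat) : nat := snd (of_nat n).
Definition cantor_diag (n : nat) : nat := cantor_snd n + cantor_fst n.

Lemma computable_triangle o : computable1 o triangle.
Proof. apply (computable_rec1 _ _ 0 (fun i m => S i + m)); [computable | reflexivity ..]. Qed.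
#[export] Hint Resolve computable_triangle : computable.

Lemma computable_cantor_pair o : computable2 o cantor_pair.
Proof.
  apply (computable_ext _ _ (fun p => snd p + triangle (snd p + fst p))); [| computable].
  intros [x y]; reflexivity.
Qed.
#[export] Hint Resolve computable_cantor_pair : computable.

Lemma triangle_le s t : s <= t -> triangle s <= triangle t.
Proof. induction 1; [| simpl]; lia. Qed.

Lemma of_nat_decomp n : n = cantor_snd n + triangle (cantor_diag n).
Proof.
  unfold cantor_diag, cantor_fst, cantor_snd. rewrite <- (cancel_to_of n) at 1.
  destruct (of_nat n) as [x y]. reflexivity.
Qed.

Lemma computable_cantor_diag o : computable1 o cantor_diag.
Proof.
  apply (computable_least o (fun s n => n <? triangle (S s))); [computable |].
  intros n. pose proof (of_nat_decomp n) as En.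
  assert (cantor_snd n <= cantor_diag n) by (unfold cantor_diag; lia). split.
  - apply Nat.ltb_lt. simpl. lia.
  - intros s Hs. apply Nat.ltb_ge. pose proof (triangle_le (S s) _ Hs). lia.
Qed.
#[export] Hint Resolve computable_cantor_diag : computable.

Lemma computable_cantor_snd o : computable1 o cantor_snd.
Proof.
  apply (computable_ext _ _ (fun n => n - triangle (cantor_diag n))); [| computable].
  intros n. pose proof (of_nat_decomp n). lia.
Qed.
#[export] Hint Resolve computable_cantor_snd : computable.

Lemma computable_cantor_fst o : computable1 o cantor_fst.
Proof.
  apply (computable_ext _ _ (fun n => cantor_diag n - cantor_snd n)); [| computable].
  intros n. unfold cantor_diag. lia.
Qed.
#[export] Hint Resolve computable_cantor_fst : computable.

(** * Turing reducibility *)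

Fixpoint subst_oracle (d : code) (c : code) : code :=
  match c with
  | cOrc => cComp d (ccons (cProj 0) cnil)
  | cComp f gs => cComp (subst_oracle d f) (subst_oracles d gs)
  | cPrec f g => cPrec (subst_oracle d f) (subst_oracle d g)
  | cMu f => cMu (subst_oracle d f)
  | _ => c
  end
with subst_oracles (d : code) (gs : codes) : codes :=
  match gs with
  | cnil => cnil
  | ccons g gs => ccons (subst_oracle d g) (subst_oracles d gs)
  end.

Section SubstOracle.
Variables (A B : nat -> bool) (d : code).
Hypothesis Hd : forall x, eval B d [x] (b2n (A x)).

Lemma eval_oracle_call v : eval B (cComp d (ccons (cProj 0) cnil)) v (b2n (A (hd 0 v))).
Proof.
  apply ev_comp with [hd 0 v]; [| apply Hd].
  constructor; [destruct v; constructor | constructor].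
Qed.

Fixpoint eval_subst_oracle c v y (H : eval A c v y) {struct H} :
  eval B (subst_oracle d c) v y :=
  match H in eval _ c v y return eval B (subst_oracle d c) v y with
  | ev_zero v => ev_zero B v
  | ev_succ v => ev_succ B v
  | ev_proj i v => ev_proj B i v
  | ev_orc v => eval_oracle_call v
  | ev_comp f gs v ws y Hgs Hf =>
      ev_comp B _ _ v ws y (evals_subst_oracle gs v ws Hgs) (eval_subst_oracle f ws y Hf)
  | ev_prec0 f g v y Hf => ev_prec0 B _ _ v y (eval_subst_oracle f v y Hf)
  | ev_precS f g n v z y Hrec Hg =>
      ev_precS B _ _ n v z y (eval_subst_oracle (cPrec f g) (n :: v) z Hrec)
        (eval_subst_oracle g _ y Hg)
  | ev_mu f v y Hzero Hpos =>
      ev_mu B _ v y (eval_subst_oracle f _ 0 Hzero)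
        (fun k hk => match Hpos k hk with
                     | ex_intro m Hm => ex_intro _ m (eval_subst_oracle f _ _ Hm)
                     end)
  end
with evals_subst_oracle gs v ws (H : evals A gs v ws) {struct H} :
  evals B (subst_oracles d gs) v ws :=
  match H in evals _ gs v ws return evals B (subst_oracles d gs) v ws with
  | evs_nil v => evs_nil B v
  | evs_cons g gs v w ws Hg Hgs =>
      evs_cons B _ _ v w ws (eval_subst_oracle g v w Hg) (evals_subst_oracle gs v ws Hgs)
  end.

End SubstOracle.

Lemma turing_le_refl A : turing_le A A.
Proof. exact (computable_oracle A). Qed.

Lemma turing_le_trans A B C : turing_le A B -> turing_le B C -> turing_le A C.
Proof.
  intros [c Hc] [d Hd]. exists (subst_oracle d c). intros n.
  exact (eval_subst_oracle B C d Hd c [n] _ (Hc n)).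
Qed.

Lemma turing_eqv_refl A : turing_eqv A A.
Proof. split; apply turing_le_refl. Qed.

Lemma turing_eqv_sym A B : turing_eqv A B -> turing_eqv B A.
Proof. intros [HAB HBA]; split; assumption. Qed.

Lemma turing_eqv_trans A B C : turing_eqv A B -> turing_eqv B C -> turing_eqv A C.
Proof. intros [HAB HBA] [HBC HCB]; split; eapply turing_le_trans; eassumption. Qed.

Definition join (A B : nat -> bool) (n : nat) : bool :=
  if Nat.even n then A (Nat.div2 n) else B (Nat.div2 n).

Definition emptyset : nat -> bool := fun _ => false.

Lemma join_double A B n : join A B (2 * n) = A n.
Proof. unfold join. rewrite Nat.even_mul, Nat.div2_double. reflexivity. Qed.

Lemma join_double_succ A B n : join A B (S (2 * n)) = B n.
Proof.
  unfold join. rewrite Nat.even_succ, Nat.odd_mul, Nat.div2_succ_double. reflexivity.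
Qed.

Lemma turing_le_join_l A B : turing_le A (join A B).
Proof.
  apply (computable_ext _ _ (fun n => b2n (join A B (2 * n)))); [| computable].
  intros n. rewrite join_double. reflexivity.
Qed.

Lemma turing_le_join_r A B : turing_le B (join A B).
Proof.
  apply (computable_ext _ _ (fun n => b2n (join A B (S (2 * n))))); [| computable].
  intros n. rewrite join_double_succ. reflexivity.
Qed.

Lemma turing_le_join A B C : turing_le A C -> turing_le B C -> turing_le (join A B) C.
Proof.
  change (computable1 C (fun n => b2n (A n)) -> computable1 C (fun n => b2n (B n)) ->
          computable1 C (fun n => b2n (join A B n))).
  intros HA HB.
  apply (computable_ext _ _ (fun n => b2n (Nat.even n && A (Nat.div2 n) ||
                                           negb (Nat.even n) && B (Nat.div2 n))));
    [| computable].
  intros n. unfold join. destruct (Nat.even n), (A _), (B _); reflexivity.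
Qed.

Lemma turing_le_emptyset A : turing_le emptyset A.
Proof. exact (computable_const A (fun x => [x]) 0). Qed.

Lemma join_eqv_r A B : turing_le A B -> turing_eqv (join A B) B.
Proof.
  split; [apply turing_le_join; [assumption | apply turing_le_refl] | apply turing_le_join_r].
Qed.

Lemma join_emptyset_eqv A : turing_eqv (join A emptyset) A.
Proof.
  split; [apply turing_le_join; [apply turing_le_refl | apply turing_le_emptyset] |
          apply turing_le_join_l].
Qed.

Local Close Scope nat_scope.

(** * Coding sets of naturals by reals *)

Definition digit (A : nat -> bool) (k : nat) : R := INR (b2n (A k)) / 4 ^ S k.

Definition real_of (A : nat -> bool) : R := Series (digit A).

Definition tail_sum (A : nat -> bool) (k : nat) : R := Series (fun j => digit A (k + j)).

Fixpoint prefix_num (A : nat -> bool) (k : nat) : nat :=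
  match k with
  | O => O
  | S k => 4 * prefix_num A k + b2n (A k)
  end.

Lemma pow4_pos k : 0 < 4 ^ k.
Proof. apply pow_lt; lra. Qed.

Lemma pow4_pos_nat k : (0 < 4 ^ k)%nat.
Proof. apply Nat.neq_0_lt_0, Nat.pow_nonzero. discriminate. Qed.

Lemma INR_pow4 k : INR (4 ^ k) = 4 ^ k.
Proof. rewrite pow_INR. replace (INR 4) with 4 by (simpl; lra). reflexivity. Qed.

Lemma digit_bounds A k : 0 <= digit A k <= / 4 ^ S k.
Proof.
  unfold digit, Rdiv. pose proof (Rinv_0_lt_compat _ (pow4_pos (S k))).
  destruct (A k); simpl INR; lra.
Qed.

Lemma geometric_majorant k j : / 4 ^ S (k + j) = / 4 ^ S k * (/ 4) ^ j.
Proof. rewrite pow_inv, <- Rinv_mult, <- pow_add. reflexivity. Qed.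

Lemma ex_series_geometric_majorant k : ex_series (fun j => / 4 ^ S k * (/ 4) ^ j).
Proof.
  apply (ex_series_scal_l (V := R_NormedModule)), ex_series_geom.
  rewrite Rabs_right; lra.
Qed.

Lemma ex_series_tail A k : ex_series (fun j => digit A (k + j)).
Proof.
  apply (ex_series_le (V := R_CompleteNormedModule) _ (fun j => / 4 ^ S k * (/ 4) ^ j));
    [| apply ex_series_geometric_majorant].
  intros j. change (norm (digit A (k + j))) with (Rabs (digit A (k + j))).
  rewrite <- geometric_majorant. destruct (digit_bounds A (k + j)).
  rewrite Rabs_right; lra.
Qed.

Lemma Series_nonneg (a : nat -> R) : (forall n, 0 <= a n) -> ex_series a -> 0 <= Series a.
Proof.
  intros Ha Hex. rewrite <- (Rmult_0_l (Series a)), <- Series_scal_l.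
  apply Series_le; [intros n; specialize (Ha n); split; lra | exact Hex].
Qed.

Lemma tail_sum_bounds A k : 0 <= tail_sum A k <= / 4 ^ k / 3.
Proof.
  split.
  - apply Series_nonneg; [intros j; apply digit_bounds | apply ex_series_tail].
  - apply Rle_trans with (Series (fun j => / 4 ^ S k * (/ 4) ^ j)).
    + apply Series_le; [| apply ex_series_geometric_majorant].
      intros j. rewrite <- geometric_majorant. apply digit_bounds.
    + rewrite Series_scal_l, Series_geom by (rewrite Rabs_right; lra).
      pose proof (pow4_pos k). simpl pow. right. field. lra.
Qed.

Lemma tail_sum_succ A k : tail_sum A k = digit A k + tail_sum A (S k).
Proof.
  unfold tail_sum. rewrite Series_incr_1 by apply ex_series_tail.
  rewrite Nat.add_0_r. f_equal. apply Series_ext. intros n. f_equal. lia.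
Qed.

Lemma real_of_split A k : real_of A = INR (prefix_num A k) / 4 ^ k + tail_sum A k.
Proof.
  induction k as [| k IHk].
  - unfold real_of, tail_sum. simpl. field_simplify. apply Series_ext. reflexivity.
  - rewrite IHk, tail_sum_succ. unfold digit. cbn [prefix_num].
    rewrite plus_INR, mult_INR. pose proof (pow4_pos k). simpl pow. simpl (INR 4). field. lra.
Qed.

Lemma real_of_nonneg A : 0 <= real_of A.
Proof. rewrite (real_of_split A 0). pose proof (tail_sum_bounds A 0). simpl. lra. Qed.

Lemma real_of_join A B :
  real_of (join A B) = real_of (join A emptyset) + real_of (join emptyset B).
Proof.
  unfold real_of. rewrite <- Series_plus by (apply (ex_series_tail _ 0)).
  apply Series_ext. intros n. unfold digit, join, emptyset.
  destruct (Nat.even n); simpl b2n; simpl INR; lra.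
Qed.

Definition qsign (n : nat) : nat := cantor_fst (cantor_fst n).
Definition qnum (n : nat) : nat := cantor_snd (cantor_fst n).
Definition qden (n : nat) : nat := cantor_snd n.
Definition rat_index (m b : nat) : nat := cantor_pair (cantor_pair 0 m) b.

Definition is_negative (n : nat) : bool := negb (Nat.even (qsign n)) && (0 <? qnum n)%nat.

Lemma IZR_of_succ_nat b : IZR (Z.pos (Pos.of_succ_nat b)) = INR (S b).
Proof. rewrite Zpos_P_of_succ_nat, <- Nat2Z.inj_succ, <- INR_IZR_INZ. reflexivity. Qed.

Lemma qenum_eq n : Q2R (qenum n) =
  (if Nat.even (qsign n) then INR (qnum n) else - INR (qnum n)) / INR (S (qden n)).
Proof.
  unfold qenum, qsign, qnum, qden, cantor_fst, cantor_snd.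
  destruct (of_nat n) as [a b]. simpl. destruct (of_nat a) as [s m]. simpl.
  unfold Q2R. simpl. rewrite IZR_of_succ_nat.
  destruct (Nat.even s); [| rewrite opp_IZR]; rewrite <- INR_IZR_INZ; reflexivity.
Qed.

Lemma qenum_rat_index m b : Q2R (qenum (rat_index m b)) = INR m / INR (S b).
Proof.
  rewrite qenum_eq. unfold qsign, qnum, qden, rat_index, cantor_fst, cantor_snd, cantor_pair.
  rewrite cancel_of_to; cbn [fst snd]; rewrite cancel_of_to. reflexivity.
Qed.

Lemma qenum_nonneg n : is_negative n = false -> Q2R (qenum n) = INR (qnum n) / INR (S (qden n)).
Proof.
  unfold is_negative. rewrite qenum_eq.
  destruct (Nat.even (qsign n)); [reflexivity |]. destruct (qnum n); [| discriminate].
  intros _. simpl. f_equal. lra.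
Qed.

Lemma qenum_negative n : is_negative n = true -> Q2R (qenum n) < 0.
Proof.
  unfold is_negative. rewrite qenum_eq. destruct (Nat.even (qsign n)); [discriminate |].
  cbn [negb andb]. intros Hpos%Nat.ltb_lt%lt_0_INR.
  pose proof (lt_0_INR (S (qden n)) (Nat.lt_0_succ _)).
  unfold Rdiv. rewrite Ropp_mult_distr_l_reverse. apply Ropp_lt_gt_0_contravar.
  apply Rmult_lt_0_compat; [lra | apply Rinv_0_lt_compat; lra].
Qed.

(* The queried rational (8M+1)/(2*4^(i+1)), with M the value of the first i digits,
   is the midpoint of [4M/4^(i+1), (4M+1)/4^(i+1)], while the digits after the i-th
   contribute at most a third of 4^-(i+1). *)
Lemma cut_midpoint_digit A i :
  cut (real_of A) (rat_index (8 * prefix_num A i + 1) (2 * 4 ^ S i - 1)) = A i.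
Proof.
  unfold cut. rewrite qenum_rat_index.
  replace (S (2 * 4 ^ S i - 1)) with (2 * 4 ^ S i)%nat by (pose proof (pow4_pos_nat (S i)); lia).
  rewrite (real_of_split A (S i)). cbn [prefix_num].
  pose proof (tail_sum_bounds A (S i)) as Ht.
  pose proof (Rinv_0_lt_compat _ (pow4_pos (S i))) as Hu.
  rewrite !plus_INR, !mult_INR, INR_pow4. unfold Rdiv in *. rewrite Rinv_mult.
  set (u := / 4 ^ S i) in *. set (M := INR (prefix_num A i)) in *.
  destruct (A i), (Rlt_dec _ _); try reflexivity; exfalso; simpl INR in *; lra.
Qed.

Lemma computable_rat_index o : computable2 o rat_index.
Proof. unfold rat_index. computable. Qed.
#[export] Hint Resolve computable_rat_index : computable.

Lemma turing_le_cut_real_of A : turing_le A (cut (real_of A)).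
Proof.
  set (o := cut (real_of A)).
  assert (Hprefix : computable1 o (prefix_num A)).
  { apply (computable_rec1 _ _ 0
             (fun i M => 4 * M + b2n (o (rat_index (8 * M + 1) (2 * 4 ^ S i - 1))))%nat);
      [computable | reflexivity |].
    intros i. unfold o. rewrite cut_midpoint_digit. reflexivity. }
  apply (computable_ext _ _ (fun i => b2n (o (rat_index (8 * prefix_num A i + 1)
                                                         (2 * 4 ^ S i - 1)))));
    [| computable].
  intros i. unfold o. rewrite cut_midpoint_digit. reflexivity.
Qed.

Lemma INR_frac_lt a b c d : (0 < b)%nat -> (0 < d)%nat ->
  INR a / INR b < INR c / INR d <-> (a * d < c * b)%nat.
Proof.
  intros Hb%lt_0_INR Hd%lt_0_INR.
  assert (Hbd : 0 < INR b * INR d) by (apply Rmult_lt_0_compat; assumption).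
  assert (Ea : INR (a * d) = INR a / INR b * (INR b * INR d))
    by (rewrite mult_INR; field; lra).
  assert (Ec : INR (c * b) = INR c / INR d * (INR b * INR d))
    by (rewrite mult_INR; field; lra).
  split; intros H.
  - apply INR_lt. rewrite Ea, Ec. apply Rmult_lt_compat_r; assumption.
  - apply lt_INR in H. rewrite Ea, Ec in H. exact (Rmult_lt_reg_r _ _ _ Hbd H).
Qed.

Lemma INR_frac_le a b c d : (0 < b)%nat -> (0 < d)%nat ->
  INR a / INR b <= INR c / INR d <-> (a * d <= c * b)%nat.
Proof.
  intros Hb Hd. rewrite Nat.le_ngt, <- (INR_frac_lt c d a b Hd Hb). split; intros H; lra.
Qed.

Lemma INR_frac_eq a b c d : (0 < b)%nat -> (0 < d)%nat ->
  INR a / INR b = INR c / INR d <-> (a * d = c * b)%nat.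
Proof.
  intros Hb Hd. pose proof (INR_frac_le a b c d Hb Hd) as Hle.
  pose proof (INR_frac_le c d a b Hd Hb) as Hge.
  split; intros E.
  - apply Nat.le_antisymm; [apply Hle | apply Hge]; lra.
  - apply Rle_antisym; [apply Hle | apply Hge]; lia.
Qed.

Definition lower (A : nat -> bool) (k : nat) : R := INR (prefix_num A k) / INR (4 ^ k).
Definition upper (A : nat -> bool) (k : nat) : R :=
  INR (3 * prefix_num A k + 1) / INR (3 * 4 ^ k).

Lemma upper_eq A k : upper A k = lower A k + / 4 ^ k / 3.
Proof.
  unfold upper, lower. rewrite plus_INR, !mult_INR, INR_pow4.
  pose proof (pow4_pos k). simpl. field. lra.
Qed.

Lemma real_of_between A k : lower A k <= real_of A <= upper A k.
Proof.
  rewrite upper_eq, (real_of_split A k). unfold lower. rewrite INR_pow4.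
  pose proof (tail_sum_bounds A k). lra.
Qed.

Lemma lower_nonneg A k : 0 <= lower A k.
Proof.
  apply Rdiv_le_0_compat; [apply pos_INR | apply lt_0_INR, pow4_pos_nat].
Qed.

Local Open Scope nat_scope.

Definition lt_lower (A : nat -> bool) (k n : nat) : bool :=
  is_negative n || (qnum n * 4 ^ k <? prefix_num A k * S (qden n)).
Definition ge_upper (A : nat -> bool) (k n : nat) : bool :=
  negb (is_negative n) && ((3 * prefix_num A k + 1) * S (qden n) <=? qnum n * (3 * 4 ^ k)).
Definition eq_frac (m b n : nat) : bool :=
  negb (is_negative n) && (qnum n * S b =? m * S (qden n)).

Local Close Scope nat_scope.

Lemma lt_lower_spec A k n : lt_lower A k n = true <-> Q2R (qenum n) < lower A k.
Proof.
  unfold lt_lower. destruct (is_negative n) eqn:N; cbn [orb].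
  - pose proof (qenum_negative n N). pose proof (lower_nonneg A k). split; [lra | auto].
  - rewrite qenum_nonneg, Nat.ltb_lt by exact N. unfold lower.
    rewrite INR_frac_lt; [reflexivity | lia | apply pow4_pos_nat].
Qed.

Lemma ge_upper_spec A k n : ge_upper A k n = true <-> upper A k <= Q2R (qenum n).
Proof.
  unfold ge_upper. destruct (is_negative n) eqn:N; cbn [negb andb].
  - pose proof (qenum_negative n N). pose proof (lower_nonneg A k).
    pose proof (Rinv_0_lt_compat _ (pow4_pos k)). rewrite upper_eq.
    split; [discriminate | lra].
  - rewrite qenum_nonneg, Nat.leb_le by exact N. unfold upper.
    pose proof (pow4_pos_nat k). rewrite INR_frac_le; [reflexivity | lia | lia].
Qed.

Lemma eq_frac_spec m b n : eq_frac m b n = true <-> Q2R (qenum n) = INR m / INR (S b).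
Proof.
  unfold eq_frac. destruct (is_negative n) eqn:N; cbn [negb andb].
  - pose proof (qenum_negative n N).
    assert (0 <= INR m / INR (S b))
      by (apply Rdiv_le_0_compat; [apply pos_INR | apply lt_0_INR; lia]).
    split; [discriminate | lra].
  - rewrite qenum_nonneg, Nat.eqb_eq by exact N. rewrite INR_frac_eq; [reflexivity | lia | lia].
Qed.

Lemma computable_prefix_num A : computable1 A (prefix_num A).
Proof.
  apply (computable_rec1 _ _ 0 (fun k M => 4 * M + b2n (A k))%nat);
    [computable | reflexivity ..].
Qed.
#[export] Hint Resolve computable_prefix_num : computable.

Lemma computable_is_negative o : computable1 o (fun n => b2n (is_negative n)).
Proof. unfold is_negative, qsign, qnum. computable. Qed.
#[export] Hint Resolve computable_is_negative : computable.

Lemma computable_lt_lower A : computable2 A (fun k n => b2n (lt_lower A k n)).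
Proof. unfold lt_lower, qnum, qden. computable. Qed.

Lemma computable_ge_upper A : computable2 A (fun k n => b2n (ge_upper A k n)).
Proof. unfold ge_upper, qnum, qden. computable. Qed.

Lemma computable_eq_frac o m b : computable1 o (fun n => b2n (eq_frac m b n)).
Proof. unfold eq_frac, qnum, qden. computable. Qed.

#[export] Hint Resolve computable_lt_lower computable_ge_upper : computable.

Lemma exists_inv_pow4_lt d : 0 < d -> exists k, / 4 ^ k < d.
Proof.
  intros Hd. destruct (pow_lt_1_zero (/ 4) ltac:(rewrite Rabs_right; lra) d Hd) as [k Hk].
  exists k. specialize (Hk k (le_n _)).
  rewrite Rabs_right, pow_inv in Hk by (apply Rle_ge, pow_le; lra). exact Hk.
Qed.

(* Approximations never separate a rational from real_of A when the two are equal;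
   [hit] recognises that rational, if there is one. *)
Section CutOfRealOf.
Variables (A : nat -> bool) (hit : nat -> bool).
Hypothesis computable_hit : computable1 A (fun n => b2n (hit n)).
Hypothesis hit_spec : forall n, hit n = true <-> Q2R (qenum n) = real_of A.

Definition settled (k n : nat) : bool := hit n || lt_lower A k n || ge_upper A k n.

Lemma settled_eventually n : exists k, settled k n = true.
Proof.
  unfold settled. destruct (hit n) eqn:Hn; [exists 0%nat; reflexivity |].
  assert (Hne : Q2R (qenum n) <> real_of A) by (rewrite <- hit_spec, Hn; discriminate).
  destruct (exists_inv_pow4_lt (Rabs (Q2R (qenum n) - real_of A))) as [k Hk].
  { apply Rabs_pos_lt. lra. }
  exists k. cbn [orb].
  destruct (Rlt_dec (Q2R (qenum n)) (lower A k)) as [Hlt | Hge].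
  { apply lt_lower_spec in Hlt. rewrite Hlt. reflexivity. }
  destruct (Rle_dec (upper A k) (Q2R (qenum n))) as [Hle | Hgt].
  { apply ge_upper_spec in Hle. rewrite Hle, orb_true_r. reflexivity. }
  exfalso. pose proof (real_of_between A k). rewrite upper_eq in *.
  assert (Rabs (Q2R (qenum n) - real_of A) <= / 4 ^ k / 3) by (apply Rabs_le; lra).
  pose proof (Rinv_0_lt_compat _ (pow4_pos k)). lra.
Qed.

Lemma turing_le_cut_real_of_hit : turing_le (cut (real_of A)) A.
Proof.
  destruct (computable_search A settled) as [K [HK HKn]];
    [unfold settled; computable | exact settled_eventually |].
  apply (computable_ext _ _ (fun n => b2n (negb (hit n) && lt_lower A (K n) n)));
    [| computable].
  intros n. f_equal. unfold cut. pose proof (real_of_between A (K n)).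
  destruct (hit n) eqn:Hn; cbn [negb andb].
  - apply hit_spec in Hn. destruct (Rlt_dec _ _); [lra | reflexivity].
  - specialize (HKn n). unfold settled in HKn. rewrite Hn in HKn. cbn [orb] in HKn.
    destruct (lt_lower A (K n) n) eqn:Hlt.
    + apply lt_lower_spec in Hlt. destruct (Rlt_dec _ _); [reflexivity | lra].
    + apply ge_upper_spec in HKn. destruct (Rlt_dec _ _); [lra | reflexivity].
Qed.

End CutOfRealOf.

Lemma exists_hit A : exists hit : nat -> bool,
  computable1 A (fun n => b2n (hit n)) /\
  forall n, hit n = true <-> Q2R (qenum n) = real_of A.
Proof.
  destruct (classic (exists m b, real_of A = INR m / INR (S b))) as [[m [b Hmb]] | Hirr].
  - exists (eq_frac m b). split; [apply computable_eq_frac |].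
    intros n. rewrite eq_frac_spec, Hmb. reflexivity.
  - exists (fun _ => false). split; [computable |].
    intros n. split; [discriminate | intros Hq; exfalso].
    destruct (is_negative n) eqn:N.
    + pose proof (qenum_negative n N). pose proof (real_of_nonneg A). lra.
    + apply Hirr. exists (qnum n), (qden n). rewrite <- Hq. apply qenum_nonneg, N.
Qed.

Lemma cut_real_of_eqv A : turing_eqv (cut (real_of A)) A.
Proof.
  split; [| apply turing_le_cut_real_of].
  destruct (exists_hit A) as [hit [Hc Hspec]].
  exact (turing_le_cut_real_of_hit A hit Hc Hspec).
Qed.

(** * Subfields closed under Turing equivalence *)

Definition real_join (x y : R) : R := real_of (join (cut x) (cut y)).

Lemma real_turing_le_join_l x y : real_turing_le x (real_join x y).
Proof.
  apply (turing_le_trans _ (join (cut x) (cut y)));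
    [apply turing_le_join_l | apply turing_le_cut_real_of].
Qed.

Lemma real_turing_le_join_r x y : real_turing_le y (real_join x y).
Proof.
  apply (turing_le_trans _ (join (cut x) (cut y)));
    [apply turing_le_join_r | apply turing_le_cut_real_of].
Qed.

Fixpoint join_chain (e : nat -> R) (n : nat) : R :=
  match n with
  | O => e O
  | S n => real_join (join_chain e n) (e (S n))
  end.

Lemma join_chain_ge e n : real_turing_le (e n) (join_chain e n).
Proof. destruct n; [apply turing_le_refl | apply real_turing_le_join_r]. Qed.

Lemma join_chain_mono e n m :
  (n <= m)%nat -> real_turing_le (join_chain e n) (join_chain e m).
Proof.
  induction 1; [apply turing_le_refl |].
  eapply turing_le_trans; [eassumption | apply real_turing_le_join_l].
Qed.

Section TuringClosedSubfield.
Variable F : R -> Prop.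
Hypothesis F_subfield : is_subfield F.
Hypothesis F_closed : closed_under_turing_eqv F.

Lemma subfield_real_of y A : F y -> turing_eqv A (cut y) -> F (real_of A).
Proof.
  intros Fy HA. apply (F_closed y); [exact Fy |].
  apply turing_eqv_sym, (turing_eqv_trans _ A); [apply cut_real_of_eqv | exact HA].
Qed.

Lemma subfield_turing_le x y : F y -> real_turing_le x y -> F x.
Proof.
  intros Fy Hxy. destruct F_subfield as (_ & _ & Fadd & Fopp & _).
  assert (Fx : F (real_of (join (cut x) emptyset))).
  { replace (real_of (join (cut x) emptyset))
      with (real_of (join (cut x) (cut y)) + - real_of (join emptyset (cut y)))
      by (rewrite real_of_join; ring).
    apply Fadd; [| apply Fopp]; apply (subfield_real_of y); try assumption;
      apply join_eqv_r; [exact Hxy | apply turing_le_emptyset]. }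
  apply (F_closed _ x Fx).
  apply (turing_eqv_trans _ (join (cut x) emptyset));
    [apply cut_real_of_eqv | apply join_emptyset_eqv].
Qed.

Lemma subfield_real_join x y : F x -> F y -> F (real_join x y).
Proof.
  intros Fx Fy. destruct F_subfield as (_ & _ & Fadd & _).
  unfold real_join. rewrite real_of_join. apply Fadd.
  - apply (subfield_real_of x); [exact Fx | apply join_emptyset_eqv].
  - apply (subfield_real_of y); [exact Fy | apply join_eqv_r, turing_le_emptyset].
Qed.

Lemma subfield_join_chain e : (forall n, F (e n)) -> forall n, F (join_chain e n).
Proof. intros Fe n. induction n; [apply Fe | apply subfield_real_join; auto]. Qed.

End TuringClosedSubfield.

Definition degree_of (A : nat -> bool) : (nat -> bool) -> Prop := fun B => turing_eqv B A.

Lemma degree_of_is_degree A : is_degree (degree_of A).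
Proof. exists A. reflexivity. Qed.

Lemma degree_le_degree_of A B : turing_le A B -> degree_le (degree_of A) (degree_of B).
Proof. intros HAB. exists A, B. repeat split; try apply turing_le_refl. exact HAB. Qed.

Theorem mainTheorem19 (F : R -> Prop) :
  is_subfield F -> countable_set F -> closed_under_turing_eqv F ->
  exists C : ((nat -> bool) -> Prop) -> Prop,
    (forall D, C D -> is_degree D) /\
    (forall D1 D2, C D1 -> C D2 -> degree_le D1 D2 \/ degree_le D2 D1) /\
    (forall x : R, F x <-> reals_below C x).
Proof.
  intros Hsub [e He] Hcl.
  assert (Fe : forall n, F (e n)) by (intros n; apply He; exists n; reflexivity).
  exists (fun D => exists n, D = degree_of (cut (join_chain e n))).
  split; [| split].
  - intros D [n ->]. apply degree_of_is_degree.
  - intros D1 D2 [n ->] [m ->].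
    destruct (Nat.le_ge_cases n m); [left | right];
      apply degree_le_degree_of, join_chain_mono; assumption.
  - intros x. split.
    + intros [n <-]%He. exists (degree_of (cut (join_chain e n))).
      split; [exists n; reflexivity |].
      exists (join_chain e n). split; [apply turing_eqv_refl | apply join_chain_ge].
    + intros (D & [n ->] & y & [Hy _] & Hxy).
      apply (subfield_turing_le F Hsub Hcl x (join_chain e n));
        [apply subfield_join_chain; assumption | eapply turing_le_trans; eassumption].
Qed.
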